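(* Let $q$ be a prime power, $n\ge 1$, and let $M$ be an $n\times n$ matrix with entries in $\mathbb{F}_{q^2}$ which is not of the form $c\,\mathbb{I}_{n\times n}$ for any $c\in\mathbb{F}_{q^2}$. Then $\sharp(\mathrm{Num}_0(M))\ge \lceil (q+1)/2\rceil$.
   Context: For $u=(u_1,\dots,u_n),v=(v_1,\dots,v_n)\in\mathbb{F}_{q^2}^n$ set $\langle u,v\rangle=\sum_{i=1}^n u_i^q v_i$ (the standard Hermitian form; note $\langle u,u\rangle\in\mathbb{F}_q$). For an $n\times n$ matrix $M$ over $\mathbb{F}_{q^2}$, $\mathrm{Num}_0(M)=\{\langle u,Mu\rangle : u\in\mathbb{F}_{q^2}^n,\ \langle u,u\rangle=0\}\subseteq\mathbb{F}_{q^2}$. $\mathbb{I}_{n\times n}$ is the identity matrix. *)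

From HB Require Import structures.
From mathcomp Require Import all_boot all_order all_algebra all_field.
Set Implicit Arguments. Unset Strict Implicit. Unset Printing Implicit Defensive.
Import GRing.Theory.
Local Open Scope ring_scope.

(* F plays the role of F_{q^2}; the Frobenius x |-> x^q is the conjugation. *)

Definition herm (F : finFieldType) (q n : nat) (u v : 'cV[F]_n) : F :=
  \sum_(i < n) (u i 0) ^+ q * v i 0.

Definition Num0 (F : finFieldType) (q n : nat) (M : 'M[F]_n) : {set F} :=
  [set herm q u (M *m u) | u in [pred u : 'cV[F]_n | herm q u u == 0]].

From HB Require Import structures.
From mathcomp Require Import all_boot all_order all_algebra all_field all_solvable zify ring.
Set Implicit Arguments.
Unset Strict Implicit.
Unset Printing Implicit Defensive.

(* If some isotropic u has a := <u, M u> != 0, then each c *: u with c != 0 is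
   isotropic with <c u, M (c u)> = c^(q+1) a.  The norms c^(q+1) take at least
   q - 1 distinct nonzero values, so Num_0(M) has at least q elements.
   Otherwise <u, M u> = 0 for every isotropic u.  For i != j and t^(q+1) = -1
   the vector u = e_i + t e_j is isotropic and
   t <u, M u> = M_ij t^2 + (M_ii - M_jj) t - M_ji;
   as X^(q+1) = -1 has q + 1 >= 3 roots, this quadratic is zero, so M is scalar.
   Both counts come from a generator of the cyclic group F^* of order
   (q - 1)(q + 1). *)

Import GRing.Theory.
Local Open Scope ring_scope.

Lemma quadratic_eq0 (F : fieldType) (a b c : F) (t : 'I_3 -> F) :
  injective t -> (forall k, a * t k ^+ 2 + b * t k + c = 0) ->
  [/\ a = 0, b = 0 & c = 0].
Proof.
move=> t_inj root_t.
have chord k l : k != l -> a * (t k + t l) + b = 0.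
  move=> kl; have : (t k - t l) * (a * (t k + t l) + b) = 0.
    transitivity ((a * t k ^+ 2 + b * t k + c) - (a * t l ^+ 2 + b * t l + c)); first by ring.
    by rewrite !root_t subrr.
  by move/eqP; rewrite mulf_eq0 subr_eq0 (inj_eq t_inj) (negbTE kl) => /eqP.
have a0 : a = 0.
  have : (t 1 - t 2) * a = 0.
    transitivity ((a * (t 0 + t 1) + b) - (a * (t 0 + t 2) + b)); first by ring.
    by rewrite !chord // subrr.
  by move/eqP; rewrite mulf_eq0 subr_eq0 (inj_eq t_inj) => /eqP.
have b0 : b = 0 by have := chord 0 1 isT; rewrite a0 mul0r add0r.
by split=> //; have := root_t 0; rewrite a0 b0 !mul0r !add0r.
Qed.

Section HermitianForm.

Variables (F : finFieldType) (q n : nat).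
Implicit Types (u v : 'cV[F]_n) (M : 'M[F]_n) (c t : F) (i j : 'I_n).

Lemma hermZ c u v : herm q (c *: u) (c *: v) = c ^+ q.+1 * herm q u v.
Proof.
by rewrite /herm mulr_sumr; apply: eq_bigr => k _; rewrite !mxE exprMn exprS; ring.
Qed.

Lemma Num0_normZ M u c :
  herm q u u = 0 -> c ^+ q.+1 * herm q u (M *m u) \in Num0 q M.
Proof.
move=> u_iso; apply/imsetP; exists (c *: u); last by rewrite -scalemxAr hermZ.
by rewrite inE hermZ u_iso mulr0.
Qed.

Definition vec2 i j t : 'cV[F]_n := delta_mx i 0 + t *: delta_mx j 0.

Lemma mul_vec2 M i j t : M *m vec2 i j t = col i M + t *: col j M.
Proof. by rewrite mulmxDr -scalemxAr !colE. Qed.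

Lemma herm_vec2 i j t v : (0 < q)%N -> i != j ->
  herm q (vec2 i j t) v = v i 0 + t ^+ q * v j 0.
Proof.
move=> q_gt0 ij; have vec2E k : vec2 i j t k 0 = (k == i)%:R + t * (k == j)%:R.
  by rewrite !mxE !andbT.
rewrite /herm (bigD1 i) // (bigD1 j) 1?eq_sym //= big1 ?addr0 => [|k /andP[ki kj]].
  by rewrite !vec2E !eqxx (negbTE ij) eq_sym (negbTE ij) /= mulr0 mulr1 addr0 add0r expr1n mul1r.
by rewrite vec2E (negbTE ki) (negbTE kj) mulr0 addr0 expr0n gtn_eqF // mul0r.
Qed.

Section NormMinusOne.

Variable t : F.
Hypotheses (q_gt0 : (0 < q)%N) (tN1 : t ^+ q.+1 = -1).

Lemma vec2_isotropic i j : i != j -> herm q (vec2 i j t) (vec2 i j t) = 0.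
Proof.
move=> ij; rewrite herm_vec2 // !mxE !eqxx (negbTE ij) eq_sym (negbTE ij) /=.
by rewrite mulr0 mulr1 !addr0 add0r -exprSr tN1 subrr.
Qed.

Lemma herm_vec2_mulmx M i j : i != j ->
  t * herm q (vec2 i j t) (M *m vec2 i j t) = M i j * t ^+ 2 + (M i i - M j j) * t - M j i.
Proof.
move=> ij; rewrite herm_vec2 // mul_vec2 !mxE mulrDr mulrA -exprS tN1; ring.
Qed.

End NormMinusOne.

End HermitianForm.

Section FiniteFieldUnits.

Variable F : finFieldType.

Lemma expf_card_pred (x : F) : x != 0 -> x ^+ #|F|.-1 = 1.
Proof.
move=> x_neq0; apply: (mulIf x_neq0).
by rewrite mul1r -exprSr prednK ?expf_card // ltnW ?card_finNzRing_gt1.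
Qed.

Lemma finField_prim_root : exists z : F, #|F|.-1.-primitive_root z.
Proof.
have units_gt0 : (0 < #|F|.-1)%N by rewrite -subn1 subn_gt0 card_finNzRing_gt1.
have /hasP[z _ zP] : has #|F|.-1.-primitive_root (enum (predC1 (0 : F))).
  apply: has_prim_root units_gt0 _ (enum_uniq _) _; last by rewrite -cardE cardC1.
  apply/allP => x; rewrite mem_enum => x_neq0.
  by rewrite unity_rootE expf_card_pred.
by exists z.
Qed.

End FiniteFieldUnits.

Definition norms (F : finFieldType) (q : nat) : {set F} :=
  [set x ^+ q.+1 | x in predC1 0].

Section QuadraticExtension.

Variables (F : finFieldType) (q : nat).
Hypothesis cardF : #|F| = (q ^ 2)%N.

Lemma sqrt_card_gt1 : (1 < q)%N.
Proof.
have := card_finNzRing_gt1 F; rewrite cardF.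
by case: q => [|[|q']] //; rewrite ltnn.
Qed.

Lemma card_units_factor : #|F|.-1 = (q.-1 * q.+1)%N.
Proof. have := sqrt_card_gt1; rewrite cardF; nia. Qed.

Lemma card_norms : (q.-1 <= #|norms F q|)%N.
Proof.
have [z zP] := finField_prim_root F; rewrite card_units_factor in zP.
have q1_gt0 : (0 < q.-1)%N by have := sqrt_card_gt1; lia.
have wP : q.-1.-primitive_root (z ^+ q.+1).
  by have := dvdn_prim_root zP (dvdn_mulr _ (dvdnn q.-1)); rewrite mulKn.
have z_neq0 : z != 0 by rewrite (prim_root_eq0 zP) muln_eq0 negb_or -!lt0n q1_gt0.
rewrite -[q.-1]card_ord -(card_imset _ (f := fun j : 'I_q.-1 => z ^+ q.+1 ^+ j)).
  apply/subset_leq_card/subsetP => _ /imsetP[j _ ->].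
  by apply/imsetP; exists (z ^+ j); rewrite ?inE ?expf_neq0 // -!exprM mulnC.
move=> i j /eqP; rewrite (eq_prim_root_expr wP) !modn_small // => /eqP.
exact: val_inj.
Qed.

Lemma exists_norm_eqN1 : exists t : F, t ^+ q.+1 = -1.
Proof.
have [q_odd | q_even] := boolP (odd q).
  have [z zP] := finField_prim_root F.
  have q1E : q.-1 = (q./2 * 2)%N by rewrite -[q in LHS]odd_double_half q_odd -muln2.
  rewrite card_units_factor q1E -mulnA in zP.
  have wP : 2.-primitive_root (z ^+ q./2 ^+ q.+1).
    have := dvdn_prim_root zP (dvdn_mull _ (dvdn_mulr _ (dvdnn 2))).
    by rewrite mulnCA mulKn // exprM.
  exists (z ^+ q./2); apply/eqP.
  have := prim_expr_order wP; move/eqP; rewrite sqrf_eq1.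
  by have := prim_order_dvd wP 1; rewrite expr1 => <-.
have units_odd : odd #|F|.-1.
  rewrite cardF -subn1 oddB ?oddX ?(negbTE q_even) // expn_gt0.
  by have := sqrt_card_gt1; lia.
have m1_neq0 : (-1 : F) != 0 by rewrite oppr_eq0 oner_eq0.
exists 1; rewrite expr1n.
by rewrite -[LHS](expf_card_pred m1_neq0) -signr_odd units_odd.
Qed.

Lemma three_norm_eqN1 :
  exists t : 'I_3 -> F, injective t /\ forall k, t k ^+ q.+1 = -1.
Proof.
have [t0 t0N1] := exists_norm_eqN1.
have t0_neq0 : t0 != 0.
  apply: contraPneq t0N1 => ->.
  by rewrite expr0n => /eqP; rewrite eq_sym oppr_eq0 oner_eq0.
have [z zP] := finField_prim_root F; rewrite card_units_factor in zP.
have vP : q.+1.-primitive_root (z ^+ q.-1).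
  by have := dvdn_prim_root zP (dvdn_mull _ (dvdnn q.+1)); rewrite mulnK.
have q1_ge3 : (3 <= q.+1)%N by have := sqrt_card_gt1; lia.
exists (fun k => t0 * z ^+ q.-1 ^+ k); split.
  move=> i j /(mulfI t0_neq0)/eqP.
  rewrite (eq_prim_root_expr vP) !modn_small ?(leq_trans (ltn_ord _)) // => /eqP.
  exact: val_inj.
by move=> k; rewrite exprMn t0N1 (exprAC _ k) (prim_expr_order vP) expr1n mulr1.
Qed.

Variables (n : nat) (M : 'M[F]_n).

Lemma scalar_of_isotropic_form_eq0 :
  (forall u : 'cV[F]_n, herm q u u = 0 -> herm q u (M *m u) = 0) ->
  exists c, M = c%:M.
Proof.
move=> iso_eq0.
have q_gt0 : (0 < q)%N by have := sqrt_card_gt1; lia.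
have [t [t_inj tN1]] := three_norm_eqN1.
have offdiag i j : i != j -> M i j = 0 /\ M i i = M j j.
  move=> ij; have root_t k : M i j * t k ^+ 2 + (M i i - M j j) * t k + - M j i = 0.
    by rewrite -(herm_vec2_mulmx q_gt0 (tN1 k)) // iso_eq0 ?mulr0 ?vec2_isotropic.
  by have [-> /eqP + _] := quadratic_eq0 t_inj root_t; rewrite subr_eq0 => /eqP.
have [n0 | n_gt0] := posnP n.
  by exists 0; apply/matrixP => i; suff : (i < 0)%N by []; rewrite -n0.
pose i0 := Ordinal n_gt0; exists (M i0 i0); apply/matrixP => i j; rewrite mxE.
have [<- | ij] := eqVneq i j; last by rewrite mulr0n; case: (offdiag _ _ ij).
rewrite mulr1n; have [-> // | i0i] := eqVneq i0 i.
by case: (offdiag _ _ i0i).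
Qed.

Lemma card_Num0_ge u :
  herm q u u = 0 -> herm q u (M *m u) != 0 -> (q <= #|Num0 q M|)%N.
Proof.
move=> u_iso a_neq0; set a := herm q u (M *m u).
have sub : 0 |: [set y * a | y in norms F q] \subset Num0 q M.
  apply/subsetP => _ /setU1P[-> | /imsetP[_ /imsetP[x _ ->] ->]].
    by have := Num0_normZ M 0 u_iso; rewrite expr0n mul0r.
  exact: Num0_normZ.
have a_notin : 0 \notin [set y * a | y in norms F q].
  apply/imsetP => -[_ /imsetP[x x_neq0 ->]] /esym/eqP.
  by rewrite mulf_eq0 expf_eq0 (negbTE a_neq0) (negbTE x_neq0) andbF.
have := subset_leq_card sub; rewrite cardsU1 a_notin card_imset; last exact: mulIf.
apply: leq_trans; rewrite add1n -[q in (q <= _)%N](prednK (ltnW sqrt_card_gt1)) ltnS.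
exact: card_norms.
Qed.

End QuadraticExtension.

Theorem corollary1 (F : finFieldType) (q : nat)
  (hq : exists p k : nat, [/\ prime p, (0 < k)%N & q = (p ^ k)%N])
  (hF : #|F| = (q ^ 2)%N)
  (n : nat) (hn : (0 < n)%N) (M : 'M[F]_n)
  (hM : ~ exists c : F, M = c%:M) :
  ((q.+2) %/ 2 <= #|Num0 q M|)%N.
Proof.
have [/existsP[u /andP[/eqP u_iso a_neq0]] | /existsPn no_witness] :=
  boolP [exists u : 'cV[F]_n, (herm q u u == 0) && (herm q u (M *m u) != 0)].
  apply: leq_trans (card_Num0_ge hF u_iso a_neq0).
  by have := sqrt_card_gt1 hF; lia.
case: hM; apply: (scalar_of_isotropic_form_eq0 hF) => u u_iso.
by apply/eqP; have := no_witness u; rewrite u_iso eqxx /= negbK.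
Qed.
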